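(* Let $P$ be a natural unit interval order. For every finite multiset $\beta$ of elements of $P$, $W_\beta(t)\in(I^P_T)^\perp$. Moreover, $\{W_\beta(t)\}$, as $\beta$ ranges over all finite multisets of elements of $P$, is a $\mathbb{Q}(t)$-basis of $(I^P_T)^\perp\subseteq\mathbb{Q}(t)\otimes\mathcal{U}_P^*$.
   Context: A natural unit interval order is a finite poset $P$ with a total order $<$ on $P$ such that $a<_Pb$ implies $a<b$, and if $a\sim_Pb$, $b\sim_Pc$, $a<_Pc$ then $a<b<c$ (here $\sim_P$ means incomparable or equal). $\mathcal{U}_P=\mathbb{Z}\langle u_a:a\in P\rangle$; $\mathcal{U}_P^*$ is the free module on words in $P$, with pairing $\langle\mathbf{u}_w,v\rangle=\delta_{vw}$ extended $\mathbb{Q}(t)$-bilinearly; $I^\perp$ is the set of $\gamma$ with $\langle z,\gamma\rangle=0$ for all $z\in I$. $I^P_T\subseteq\mathbb{Q}(t)\otimes\mathcal{U}_P$ is the ideal generated by $u_cu_a-u_au_c$ ($a<_Pc$) and $u_bu_a-t\,u_au_b$ ($a<b$, $a\sim_Pb$). For a word $w$, $\mathrm{inv}_P(w)=\#\{(i,j): i<j,\ w_i>w_j,\ w_i\sim_Pw_j\}$. The content of a word is its multiset of letters; $W_\beta(t)=\sum t^{\mathrm{inv}_P(w)}w$ over all words $w$ of content $\beta$. *)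

From HB Require Import structures.
From mathcomp Require Import all_boot all_order all_algebra.
From mathcomp Require Import fraction finmap.
From mathcomp.multinomials Require Import monalg.

Set Implicit Arguments.
Unset Strict Implicit.
Unset Printing Implicit Defensive.

Import Order.TTheory GRing.Theory Num.Theory.
Local Open Scope ring_scope.

Definition Qt : fieldType := {fraction {poly rat}}.
Definition tvar : Qt := tofrac ('X : {poly rat}).

(* The poset P is {0,...,n-1} =: 'I_n; the total order < of the natural unit
   interval order is the natural order of 'I_n, and the strict partial order
   <_P is the relation ltP. *)

Definition simP (n : nat) (ltP : rel 'I_n) (a b : 'I_n) : bool :=
  (a == b) || (~~ ltP a b && ~~ ltP b a).

Definition nat_unit_interval_order (n : nat) (ltP : rel 'I_n) : Prop :=
  [/\ irreflexive ltP, transitive ltP,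
      (forall a b, ltP a b -> (a < b)%N) &
      (forall a b c, simP ltP a b -> simP ltP b c -> ltP a c ->
         (a < b < c)%N)].

(* Words in P; Q(t) ⊗ U_P = free associative Q(t)-algebra on the u_a,
   realized as the monoid algebra of the free monoid on 'I_n. *)
Definition word (n : nat) := {fmonom 'I_n}.
Definition UP (n : nat) := {malg Qt[word n]}.
(* Q(t) ⊗ U_P^* : free Q(t)-module on words (finitely supported). *)
Definition UPdual (n : nat) := {malg Qt[word n]}.

Definition u (n : nat) (a : 'I_n) : UP n := << FMonom [:: a] >>.

Definition pairing (n : nat) (z : UP n) (g : UPdual n) : Qt :=
  \sum_(w <- (msupp z : {fset word n})) z@_w * g@_w.

Inductive ideal_gen (R : pzRingType) (S : R -> Prop) : R -> Prop :=
| ideal_gen_gen x : S x -> ideal_gen S x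
| ideal_gen_0 : ideal_gen S 0
| ideal_gen_add x y : ideal_gen S x -> ideal_gen S y -> ideal_gen S (x + y)
| ideal_gen_mul a x b : ideal_gen S x -> ideal_gen S (a * x * b).

Definition IT_gens (n : nat) (ltP : rel 'I_n) (z : UP n) : Prop :=
  (exists a c : 'I_n, ltP a c /\ z = u c * u a - u a * u c) \/
  (exists a b : 'I_n, (a < b)%N /\ simP ltP a b /\ z = u b * u a - tvar *: (u a * u b)).

Definition IT (n : nat) (ltP : rel 'I_n) : UP n -> Prop := ideal_gen (IT_gens ltP).

Definition perp (n : nat) (I : UP n -> Prop) (g : UPdual n) : Prop :=
  forall z, I z -> pairing z g = 0.

Fixpoint invP (n : nat) (ltP : rel 'I_n) (w : seq 'I_n) : nat :=
  match w with
  | [::] => 0%N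
  | a :: w' => (count (fun b : 'I_n => (b < a)%N && simP ltP a b) w' + invP ltP w')%N
  end.

Definition multiset (n : nat) := {ffun 'I_n -> nat}.
Definition content (n : nat) (w : seq 'I_n) : multiset n :=
  [ffun a => count_mem a w].

(* W_beta(t) = sum of t^{inv_P(w)} w over all words w of content beta
   (such words have length |beta| = sum_a beta(a)). *)
Definition W (n : nat) (ltP : rel 'I_n) (beta : multiset n) : UPdual n :=
  \sum_(w : (\sum_(a : 'I_n) beta a)%N.-tuple 'I_n | content w == beta)
     (tvar ^+ invP ltP w) *: << FMonom (val w) >>.

(* A functional g is orthogonal to I^P_T iff its coefficients obey the swap
   rules g(x c a y) = g(x a c y) for a <_P c, and g(x b a y) = t g(x a b y) for
   a < b incomparable.  These swaps change inv_P by exactly the exponent of t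
   involved, so bubble sort gives g(w) = t^inv_P(w) g(sort w): g is
   determined by its values on the sorted words, one per content beta, and
   equals sum_beta g(sorted beta) W_beta.  Conversely each W_beta obeys the swap
   rules, and the W_beta have disjoint supports each containing a sorted word. *)

From HB Require Import structures.
From mathcomp Require Import all_boot all_order all_algebra.
From mathcomp Require Import fraction finmap.
From mathcomp.multinomials Require Import monalg.
From mathcomp Require Import zify.
Import Order.TTheory GRing.Theory.
Local Open Scope ring_scope.
Set Implicit Arguments.
Unset Strict Implicit.

Section MonoidAlgebra.
Variables (K : monomType) (R : comNzRingType).
Implicit Types (x y : {malg R[K]}) (c : R) (k : K).

Lemma malgU_scale c k : << c *g k >> = c *: (<< k >> : {malg R[K]}).
Proof. by apply/malgP => k'; rewrite mcoeffZ !mcoeffU mulr_natr. Qed.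

Lemma malg_scalerAr c x y : c *: (x * y) = x * (c *: y).
Proof.
apply/malgP => k; rewrite mcoeffZ (mcoeffMlw _ (fsubset_refl _) (msuppZ_le c y)).
rewrite mcoeffMl mulr_sumr; apply: eq_bigr => k1 _; rewrite mulr_sumr.
by apply: eq_bigr => k2 _; rewrite mcoeffZ mulrnAr mulrCA.
Qed.

Lemma malg_mulUU k1 k2 : << k1 >> * << k2 >> = << mmul k1 k2 >> :> {malg R[K]}.
Proof. by rewrite malgM_def fgmulUU mulr1. Qed.

End MonoidAlgebra.

Section Pairing.
Variables (n : nat) (g : UPdual n).
Implicit Types (x y z p q : UP n) (k : word n).

Lemma pairingE z : pairing z g = \sum_(w <- msupp g) z@_w * g@_w.
Proof.
rewrite /pairing (big_fset_incl _ (fsubsetUl (msupp z) (msupp g))); last first.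
  by move=> w _ /mcoeff_outdom ->; rewrite mul0r.
rewrite [RHS](big_fset_incl _ (fsubsetUr (msupp z) (msupp g))) //.
by move=> w _ /mcoeff_outdom ->; rewrite mulr0.
Qed.

Lemma pairing0 : pairing 0 g = 0.
Proof. by rewrite pairingE big1 // => w _; rewrite mcoeff0 mul0r. Qed.

Lemma pairingD z1 z2 : pairing (z1 + z2) g = pairing z1 g + pairing z2 g.
Proof. by rewrite !pairingE -big_split; apply: eq_bigr => w _; rewrite mcoeffD mulrDl. Qed.

Lemma pairingZ c z : pairing (c *: z) g = c * pairing z g.
Proof. by rewrite !pairingE mulr_sumr; apply: eq_bigr => w _; rewrite mcoeffZ mulrA. Qed.

Lemma pairingB z1 z2 : pairing (z1 - z2) g = pairing z1 g - pairing z2 g.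
Proof. by rewrite pairingD -scaleN1r pairingZ mulN1r. Qed.

Lemma pairing_mulBZ c x p q y :
  pairing (x * (p - c *: q) * y) g = pairing (x * p * y) g - c * pairing (x * q * y) g.
Proof. by rewrite mulrBr mulrBl -malg_scalerAr -scalerAl pairingB pairingZ. Qed.

Lemma pairing_sum (I : Type) (r : seq I) (F : I -> UP n) :
  pairing (\sum_(i <- r) F i) g = \sum_(i <- r) pairing (F i) g.
Proof. by elim: r => [|i r IH]; rewrite ?big_nil ?pairing0 // !big_cons pairingD IH. Qed.

Lemma pairingU k : pairing << k >> g = g@_k.
Proof. by rewrite /pairing msuppU1 big_seq_fset1 mcoeffUU mul1r. Qed.

Lemma perp_ideal_genP (S : UP n -> Prop) :
  perp (ideal_gen S) g <->
  (forall z k l, S z -> pairing (<< k >> * z * << l >>) g = 0).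
Proof.
split=> [g_perp z k l Sz | g_sandwich]; first exact/g_perp/ideal_gen_mul/ideal_gen_gen.
suff sandwich z : ideal_gen S z -> forall a b, pairing (a * z * b) g = 0.
  by move=> z /sandwich /(_ 1 1); rewrite mul1r mulr1.
elim=> {z} [z Sz a b | a b | x y _ IHx _ IHy a b | a x b _ IH a' b'].
- rewrite [b]monalgE mulr_sumr pairing_sum big1 // => l _.
  rewrite [a]monalgE -mulrA mulr_suml pairing_sum big1 // => k _.
  rewrite (malgU_scale a@_k) (malgU_scale b@_l) -malg_scalerAr -scalerAl.
  by rewrite -malg_scalerAr (mulrA << k >>) !pairingZ g_sandwich // !mulr0.
- by rewrite mulr0 mul0r pairing0.
- rewrite (mulrDr a) (mulrDl _ _ b) pairingD.
  (* [exact] rather than [rewrite]: keyed matching of the induction hypotheses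
     would unfold products of the monoid algebra. *)
  by apply: etrans (addr0 0); congr (_ + _); [exact: IHx | exact: IHy].
- by rewrite (mulrA a') (mulrA a') -(mulrA _ b); exact: IH.
Qed.

Lemma pairing_sandwich (x y : seq 'I_n) (a c : 'I_n) :
  pairing (<< FMonom x >> * (u c * u a) * << FMonom y >>) g =
  g@_(FMonom (x ++ c :: a :: y)).
Proof.
rewrite /u !malg_mulUU pairingU; congr g@__.
by apply: val_inj; rewrite /= !fmM /= -catA.
Qed.

End Pairing.

Lemma count_swap (T : Type) (p : pred T) (x y : seq T) (a b : T) :
  count p (x ++ b :: a :: y) = count p (x ++ a :: b :: y).
Proof. by rewrite !count_cat /= (addnCA (p a)). Qed.

Lemma not_sorted_split (T : Type) (r : rel T) (s : seq T) :
  ~~ sorted r s -> exists x a b y, s = x ++ a :: b :: y /\ ~~ r a b.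
Proof.
elim: s => [|c s IH] //; case: s IH => [|d s] IH //= /nandP[not_rcd | /IH].
  by exists [::], c, d, s.
by move=> [x [a [b [y [-> not_rab]]]]]; exists (c :: x), a, b, y.
Qed.

Section Words.
Variables (n : nat) (ltP : rel 'I_n).
Implicit Types (x y s : seq 'I_n) (a b : 'I_n).

Lemma simPC a b : simP ltP a b = simP ltP b a.
Proof. by rewrite /simP eq_sym andbC. Qed.

Lemma content_perm s1 s2 : perm_eq s1 s2 -> content s1 = content s2.
Proof. by move/permP => eq_count; apply/ffunP => a; rewrite !ffunE eq_count. Qed.

Lemma content_swap x a b y :
  content (x ++ b :: a :: y) = content (x ++ a :: b :: y).
Proof. by apply/ffunP => c; rewrite !ffunE count_swap. Qed.

Lemma sum_content s : (\sum_a content s a)%N = size s.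
Proof.
elim: s => [|b s IH]; first by rewrite big1 // => a _; rewrite ffunE.
rewrite /= -IH (bigD1 b) //= [in RHS](bigD1 b) //= !ffunE /= eqxx add1n.
by congr (_ + _).+1; apply: eq_bigr => a ne_ab; rewrite !ffunE /= eq_sym (negbTE ne_ab).
Qed.

Lemma invP_swap x a b y :
  (invP ltP (x ++ b :: a :: y) + ((b < a)%N && simP ltP a b))%N =
  (invP ltP (x ++ a :: b :: y) + ((a < b)%N && simP ltP b a))%N.
Proof. by elim: x => [|c x IH] /=; [lia | rewrite count_swap; lia]. Qed.

Lemma invP_swap_lt x a b y : (a < b)%N ->
  invP ltP (x ++ b :: a :: y) = (invP ltP (x ++ a :: b :: y) + simP ltP a b)%N.
Proof.
move=> lt_ab; have := invP_swap x a b y.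
by rewrite lt_ab ltnNge (ltnW lt_ab) simPC /= addn0.
Qed.

Lemma invP_sorted s : sorted <=%O s -> invP ltP s = 0%N.
Proof.
elim: s => [|a s IH] //= sorted_as.
rewrite IH ?(path_sorted sorted_as) // addn0; apply/eqP.
rewrite eqn0Ngt -has_count; apply/hasPn => b /(allP (order_path_min le_trans sorted_as)).
by rewrite leEord leqNgt => /negbTE ->.
Qed.

End Words.

Definition sorted_word n (beta : multiset n) : seq 'I_n :=
  sort <=%O (flatten [seq nseq (beta a) a | a <- enum 'I_n]).

Lemma content_sorted_word n (beta : multiset n) : content (sorted_word beta) = beta.
Proof.
rewrite /sorted_word (content_perm (permEl (perm_sort _ _))).
apply/ffunP => a; rewrite ffunE count_flatten -map_comp.
rewrite (eq_map (g := fun i => ((i == a) * beta i)%N)); last first.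
  by move=> i /=; rewrite count_nseq.
rewrite sumnE big_map big_enum /= (bigD1 a) //= eqxx mul1n big1 ?addn0 // => i ne_ia.
by rewrite (negbTE ne_ia).
Qed.

Lemma sort_le_content n (s : seq 'I_n) : sort <=%O s = sorted_word (content s).
Proof.
rewrite -[RHS]sort_le_id ?sort_le_sorted //; apply/perm_sort_leP.
apply/allP => a _ /=; apply/eqP.
have := congr1 (fun f : multiset n => f a) (content_sorted_word (content s)).
by rewrite !ffunE.
Qed.

Definition inversions n (s : seq 'I_n) : nat := invP [rel _ _ | false] s.

Lemma inversions_swap_lt n (x y : seq 'I_n) (a b : 'I_n) : (a < b)%N ->
  inversions (x ++ b :: a :: y) = (inversions (x ++ a :: b :: y)).+1.
Proof.
by move=> lt_ab; rewrite /inversions (invP_swap_lt _ _ _ lt_ab) /simP /= orbT addn1.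
Qed.

Definition swap_rules n (ltP : rel 'I_n) (g : UPdual n) : Prop :=
  (forall (x y : seq 'I_n) (a c : 'I_n), ltP a c ->
     g@_(FMonom (x ++ c :: a :: y)) = g@_(FMonom (x ++ a :: c :: y))) /\
  (forall (x y : seq 'I_n) (a b : 'I_n), (a < b)%N -> simP ltP a b ->
     g@_(FMonom (x ++ b :: a :: y)) = tvar * g@_(FMonom (x ++ a :: b :: y))).

Lemma pairing_sandwich_swap n (g : UPdual n) (x y : seq 'I_n) (a b : 'I_n) (c : Qt) :
  pairing (<< FMonom x >> * (u b * u a - c *: (u a * u b)) * << FMonom y >>) g =
  g@_(FMonom (x ++ b :: a :: y)) - c * g@_(FMonom (x ++ a :: b :: y)).
Proof.
by rewrite pairing_mulBZ; congr (_ - _ * _); apply: pairing_sandwich.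
Qed.

Lemma perp_IT_swap_rules n (ltP : rel 'I_n) (g : UPdual n) :
  perp (IT ltP) g <-> swap_rules ltP g.
Proof.
rewrite /IT perp_ideal_genP; split=> [g_sandwich | [rule_lt rule_sim] z k l].
  split=> [x y a c ltP_ac | x y a b lt_ab sim_ab]; apply/eqP; rewrite -subr_eq0.
    have gen : IT_gens ltP (u c * u a - 1 *: (u a * u c)).
      by left; exists a, c; rewrite scale1r.
    by rewrite -[X in _ - X]mul1r -pairing_sandwich_swap (g_sandwich _ _ _ gen).
  have gen : IT_gens ltP (u b * u a - tvar *: (u a * u b)) by right; exists a, b.
  by rewrite -pairing_sandwich_swap (g_sandwich _ _ _ gen).
rewrite -[k]fmK -[l]fmK => -[[a [c [ltP_ac ->]]] | [a [b [lt_ab [sim_ab ->]]]]].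
  have := pairing_sandwich_swap g k l a c 1.
  by rewrite scale1r mul1r rule_lt // => ->; apply: subrr.
have := pairing_sandwich_swap g k l a b tvar.
by rewrite rule_sim // => ->; apply: subrr.
Qed.

Lemma mcoeff_W n (ltP : rel 'I_n) (beta : multiset n) (s : seq 'I_n) :
  (W ltP beta)@_(FMonom s) = if content s == beta then tvar ^+ invP ltP s else 0.
Proof.
rewrite /W raddf_sum /=; under eq_bigr => w _ do rewrite mcoeffZ mcoeffU1.
case: eqP => [content_s | content'_s]; last first.
  rewrite big1 // => w /eqP content_w.
  by case: eqP => [[w_s]|]; rewrite ?mulr0 //; case: content'_s; rewrite -w_s.
have size_s : size s == (\sum_a beta a)%N by rewrite -content_s sum_content.
rewrite (bigD1 (Tuple size_s)) /=; last by rewrite content_s.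
rewrite eqxx mulr1 big1 ?addr0 // => w /andP[_ ne_w_s].
by case: eqP => [[w_s]|]; rewrite ?mulr0 //; case/eqP: ne_w_s; apply: val_inj.
Qed.

Lemma mcoeff_sumW n (ltP : rel 'I_n) (r : seq (multiset n)) (c : multiset n -> Qt)
    (s : seq 'I_n) : uniq r ->
  (\sum_(beta <- r) c beta *: W ltP beta)@_(FMonom s) =
  if content s \in r then c (content s) * tvar ^+ invP ltP s else 0.
Proof.
move=> uniq_r; rewrite raddf_sum /=.
under eq_bigr => beta _ do rewrite mcoeffZ mcoeff_W.
case: ifP => [r_s | r'_s].
  rewrite (bigD1_seq _ r_s uniq_r) /= eqxx big1 ?addr0 // => beta ne_beta.
  by rewrite eq_sym (negbTE ne_beta) mulr0.
rewrite big1_seq // => beta /andP[_ r_beta].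
by case: eqP => [content_s|]; rewrite ?mulr0 //; rewrite content_s r_beta in r'_s.
Qed.

Section Straightening.
Variables (n : nat) (ltP : rel 'I_n).
Hypothesis ltP_lt : forall a b, ltP a b -> (a < b)%N.
Implicit Types (g : UPdual n) (x y s : seq 'I_n) (a b : 'I_n).

Lemma ltP_simPF a b : ltP a b -> simP ltP a b = false.
Proof.
move=> ltP_ab; rewrite /simP ltP_ab /= orbF.
by apply: contraTF (ltP_lt ltP_ab) => /eqP ->; rewrite ltnn.
Qed.

Lemma swap_rules_lt g x y a b : swap_rules ltP g -> (a < b)%N ->
  g@_(FMonom (x ++ b :: a :: y)) = tvar ^+ simP ltP a b * g@_(FMonom (x ++ a :: b :: y)).
Proof.
move=> [rule_lt rule_sim] lt_ab; have [ltP_ab | not_ltP_ab] := boolP (ltP a b).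
  by rewrite ltP_simPF // mul1r rule_lt.
have not_ltP_ba : ~~ ltP b a by apply: contraTN lt_ab => /ltP_lt/ltnW; rewrite leqNgt.
have sim_ab : simP ltP a b by rewrite /simP (negbTE not_ltP_ab) (negbTE not_ltP_ba) orbT.
by rewrite sim_ab expr1 rule_sim.
Qed.

(* Bubble sort: swapping an adjacent inversion lowers [inversions] by one and
   lowers inv_P, and the power of t in the coefficient, by [simP ltP a b]. *)
Lemma swap_rules_straighten g : swap_rules ltP g -> forall s,
  g@_(FMonom s) = tvar ^+ invP ltP s * g@_(FMonom (sorted_word (content s))).
Proof.
move=> rules s; have [k] := ubnP (inversions s); elim: k s => // k IH s lt_sk.
have [sorted_s | /not_sorted_split[x [b [a [y [def_s not_le_ba]]]]]] := boolP (sorted <=%O s).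
  by rewrite -sort_le_content sort_le_id // invP_sorted // mul1r.
have lt_ab : (a < b)%N by rewrite ltnNge.
rewrite def_s swap_rules_lt // IH; last first.
  by move: lt_sk; rewrite def_s (inversions_swap_lt x y lt_ab).
by rewrite (content_swap x a b y) (invP_swap_lt _ _ _ lt_ab) addnC exprD mulrA.
Qed.

Lemma W_swap_rules beta : swap_rules ltP (W ltP beta).
Proof.
split=> [x y a c ltP_ac | x y a b lt_ab sim_ab]; rewrite !mcoeff_W content_swap.
  by rewrite (invP_swap_lt _ _ _ (ltP_lt ltP_ac)) ltP_simPF ?addn0.
by case: eqP; rewrite ?mulr0 // (invP_swap_lt _ _ _ lt_ab) sim_ab addn1 exprS.
Qed.

End Straightening.

Lemma tvar_neq0 : tvar != 0.
Proof. by rewrite tofrac_eq0 polyX_eq0. Qed.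

Theorem mainTheorem6 (n : nat) (ltP : rel 'I_n) :
  nat_unit_interval_order ltP ->
  (forall beta : multiset n, perp (IT ltP) (W ltP beta)) /\
  (forall (s : seq (multiset n)) (c : multiset n -> Qt),
     uniq s -> \sum_(beta <- s) c beta *: W ltP beta = 0 ->
     forall beta, beta \in s -> c beta = 0) /\
  (forall g : UPdual n, perp (IT ltP) g ->
     exists (s : seq (multiset n)) (c : multiset n -> Qt),
       g = \sum_(beta <- s) c beta *: W ltP beta).
Proof.
move=> [_ _ ltP_lt _]; split; [|split].
- by move=> beta; apply/perp_IT_swap_rules/W_swap_rules.
- move=> r c uniq_r sum0 beta r_beta.
  have := congr1 (mcoeff (FMonom (sorted_word beta))) sum0.
  rewrite mcoeff_sumW // content_sorted_word r_beta mcoeff0 => /eqP.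
  by rewrite mulf_eq0 expf_eq0 (negbTE tvar_neq0) andbF orbF => /eqP.
- move=> g /perp_IT_swap_rules rules.
  pose r := undup [seq content (fmonom_val w) | w <- msupp g].
  exists r, (fun beta => g@_(FMonom (sorted_word beta))); apply/malgP => w.
  rewrite -[w]fmK mcoeff_sumW ?undup_uniq //.
  case: ifP => [_ | r'_w]; first by rewrite mulrC -swap_rules_straighten.
  apply: mcoeff_outdom; apply: contraFN r'_w => g_w.
  by rewrite mem_undup; apply/mapP; exists (FMonom w).
Qed.
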